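(* For every integer $n\ge2$, $\lambda(\mathbb{Z}/n\mathbb{Z})\le\frac1n\log\rho(n)$, where $\rho(n)$ is the smallest prime number that does not divide $n$.
   Context: For a compact abelian group $G$ with normalized Haar measure $\mu$ and (multiplicative) dual group of characters $\widehat{G}$, let $\mathbb{Z}[\widehat{G}]$ denote the ring of integral linear combinations of characters, regarded as functions on $G$. For $f\in\mathbb{Z}[\widehat{G}]$, the logarithmic Mahler measure over $G$ is $\mathsf{m}_G(f)=\int_G\log|f|\,d\mu$ (with $\log 0=-\infty$). The Lehmer constant of $G$ is $\lambda(G)=\inf\{\mathsf{m}_G(f): f\in\mathbb{Z}[\widehat{G}],\ \mathsf{m}_G(f)>0\}$. Here $\mathbb{Z}/n\mathbb{Z}$ is the finite cyclic group with the uniform probability measure; its characters are $\chi_k(j)=e^{2\pi i jk/n}$, $k=0,\dots,n-1$. *)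

From Stdlib Require Import Reals ZArith Znumtheory ClassicalEpsilon.
From Coquelicot Require Import Coquelicot.
Open Scope R_scope.

Definition chi (n k j : nat) : C :=
  (cos (2 * PI * INR j * INR k / INR n), sin (2 * PI * INR j * INR k / INR n)).

(* An element f of Z[hat(Z/nZ)], given by integer coefficients c_0,...,c_{n-1}:
   f(j) = sum_{k<n} c_k chi_k(j). *)
Definition feval (n : nat) (c : nat -> Z) (j : nat) : C :=
  sum_n (fun k => Cmult (RtoC (IZR (c k))) (chi n k j)) (pred n).

Definition mahler (n : nat) (c : nat -> Z) : Rbar :=
  if excluded_middle_informative (exists j, (j < n)%nat /\ feval n c j = 0%C)
  then m_infty
  else Finite (/ INR n * sum_n (fun j => ln (Cmod (feval n c j))) (pred n)).

Definition lehmer_Zn (n : nat) : Rbar :=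
  Glb_Rbar (fun x : R => exists c : nat -> Z, mahler n c = Finite x /\ 0 < x).

Definition is_rho (n : nat) (p : Z) : Prop :=
  prime p /\ ~ (p | Z.of_nat n)%Z /\
  forall q : Z, prime q -> ~ (q | Z.of_nat n)%Z -> (p <= q)%Z.

From Stdlib Require Import Reals ZArith Znumtheory List Permutation Lia Lra ClassicalEpsilon.
From Coquelicot Require Import Coquelicot.
Open Scope R_scope.

(* The witness is the geometric sum f = 1 + chi_1 + ... + chi_1^(p-1) with p = rho(n).  Then
   f(0) = p, and for 0 < j < n, with zeta = e^(2 pi i / n), f(j) (zeta^j - 1) = zeta^(jp) - 1.
   As p is coprime to n, j |-> jp mod n permutes the nonzero residues, so the factors
   |zeta^(jp) - 1| and |zeta^j - 1| cancel in the product over j, and m(f) = (log p)/n > 0. *)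

Definition expi (t : R) : C := (cos t, sin t).

Lemma expi_add (s t : R) : (expi s * expi t)%C = expi (s + t).
Proof.
  unfold expi, Cmult; simpl; rewrite cos_plus, sin_plus.
  apply injective_projections; simpl; ring.
Qed.

Lemma expi_0 : expi 0 = 1%C.
Proof. unfold expi, RtoC; rewrite cos_0, sin_0; reflexivity. Qed.

Lemma expi_period (t : R) (k : nat) : expi (t + 2 * INR k * PI) = expi t.
Proof. unfold expi; rewrite cos_period, sin_period; reflexivity. Qed.

Lemma expi_neq_1 (t : R) : 0 < t < 2 * PI -> expi t <> 1%C.
Proof.
  intros Ht Heq; injection Heq as Hc Hs.
  destruct (sin_eq_O_2PI_0 t) as [-> | [-> | ->]]; try lra.
  rewrite cos_PI in Hc; lra.
Qed.

Definition zeta (n m : nat) : C := expi (2 * PI * INR m / INR n).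

Lemma chi_zeta (n k j : nat) : chi n k j = zeta n (j * k).
Proof. unfold chi, zeta, expi; rewrite mult_INR, <- !Rmult_assoc; reflexivity. Qed.

Lemma zeta_mod (n m : nat) : (0 < n)%nat -> zeta n (m mod n) = zeta n m.
Proof.
  intros Hn; unfold zeta.
  rewrite <- (expi_period _ (m / n)); f_equal.
  replace (INR m) with (INR (n * (m / n) + m mod n)) by (f_equal; symmetry; apply Nat.div_mod_eq).
  rewrite plus_INR, mult_INR.
  field; apply not_0_INR; lia.
Qed.

Lemma zeta_neq_1 (n r : nat) : (0 < r < n)%nat -> zeta n r <> 1%C.
Proof.
  intros Hr; apply expi_neq_1.
  assert (Hrn : 0 < INR r < INR n) by (split; [apply lt_0_INR | apply lt_INR]; lia).
  pose proof PI_RGT_0.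
  split.
  - apply Rdiv_lt_0_compat; nra.
  - apply Rmult_lt_reg_r with (INR n); [lra|].
    unfold Rdiv; rewrite Rmult_assoc, Rinv_l; nra.
Qed.

Fixpoint expi_sum (t : R) (m : nat) : C :=
  match m with O => 0%C | S m' => (expi_sum t m' + expi (INR m' * t))%C end.

Lemma expi_sum_geom (t : R) (m : nat) :
  (expi_sum t m * (expi t - 1))%C = (expi (INR m * t) - 1)%C.
Proof.
  induction m as [|m IH]; simpl expi_sum.
  - rewrite Rmult_0_l, expi_0; ring.
  - transitivity (expi_sum t m * (expi t - 1) + expi (INR m * t) * expi t
                  - expi (INR m * t))%C; [ring|].
    rewrite IH, expi_add, S_INR, Rmult_plus_distr_r, Rmult_1_l; ring.
Qed.

Lemma expi_sum_0 (m : nat) : expi_sum 0 m = RtoC (INR m).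
Proof.
  induction m as [|m IH]; simpl expi_sum; [reflexivity|].
  rewrite IH, Rmult_0_r, expi_0, S_INR, RtoC_plus; reflexivity.
Qed.

Lemma sum_n_indicator {G : AbelianMonoid} (v : nat -> G) (r N : nat) :
  sum_n (fun k => if Nat.eqb r k then v k else zero) N
  = if Nat.leb r N then v r else zero.
Proof.
  induction N as [|N IH].
  - rewrite sum_O; destruct r; reflexivity.
  - rewrite sum_Sn, IH.
    destruct (Nat.leb_spec r N), (Nat.eqb_spec r (S N)), (Nat.leb_spec r (S N));
      subst; try lia; rewrite ?plus_zero_l, ?plus_zero_r; reflexivity.
Qed.

(* The coefficients of 1 + chi_1 + ... + chi_1^(m-1) = chi_0 + ... + chi_(m-1), indices taken mod n. *)
Fixpoint geom_coeffs (n m k : nat) : Z :=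
  match m with
  | O => 0
  | S m' => geom_coeffs n m' k + if Nat.eqb (m' mod n) k then 1 else 0
  end.

Lemma feval_geom_coeffs (n m j : nat) : (0 < n)%nat ->
  feval n (geom_coeffs n m) j = expi_sum (2 * PI * INR j / INR n) m.
Proof.
  intros Hn; unfold feval; induction m as [|m IH]; simpl geom_coeffs; simpl expi_sum.
  - rewrite (sum_n_ext _ (fun k => mult (RtoC 0) (chi n k j))) by reflexivity.
    rewrite sum_n_mult_l; unfold mult; simpl; ring.
  - rewrite (sum_n_ext _ (fun k => plus (RtoC (IZR (geom_coeffs n m k)) * chi n k j)%C
                                   (if Nat.eqb (m mod n) k then chi n k j else zero))).
    2: { intros k; rewrite plus_IZR, RtoC_plus.
         destruct (Nat.eqb (m mod n) k); unfold plus, zero; simpl; ring. }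
    rewrite sum_n_plus, IH, sum_n_indicator.
    replace (Nat.leb (m mod n) (pred n)) with true
      by (symmetry; apply Nat.leb_le; pose proof (Nat.mod_upper_bound m n); lia).
    rewrite chi_zeta, <- zeta_mod, Nat.Div0.mul_mod_idemp_r, zeta_mod by lia.
    unfold zeta, plus; simpl; do 2 f_equal.
    rewrite mult_INR; field; apply not_0_INR; lia.
Qed.

Lemma mul_mod_inj (n a j1 j2 : nat) : rel_prime (Z.of_nat n) (Z.of_nat a) ->
  (j1 < n)%nat -> (j2 < n)%nat -> ((j1 * a) mod n = (j2 * a) mod n)%nat -> j1 = j2.
Proof.
  intros Hcop H1 H2 Heq.
  apply (f_equal Z.of_nat) in Heq; rewrite !Nat2Z.inj_mod, !Nat2Z.inj_mul in Heq.
  apply Z.cong_iff_ex in Heq as [q Hq].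
  assert (Hdiv : (Z.of_nat n | Z.of_nat a * (Z.of_nat j1 - Z.of_nat j2))%Z)
    by (exists q; lia).
  apply Gauss in Hdiv as [k Hk]; [|exact Hcop].
  destruct (Z.lt_trichotomy k 0) as [Hk0 | [-> | Hk0]]; nia.
Qed.

Lemma fold_right_Rplus_shift (a : R) (l : list R) :
  fold_right Rplus a l = fold_right Rplus 0 l + a.
Proof. induction l as [|x l IH]; simpl; [ring | rewrite IH; ring]. Qed.

Lemma fold_right_Rplus_perm (l l' : list R) :
  Permutation l l' -> fold_right Rplus 0 l = fold_right Rplus 0 l'.
Proof. induction 1; simpl; lra. Qed.

Lemma sum_n_seq (g : nat -> R) (N : nat) :
  sum_n g N = fold_right Rplus 0 (map g (seq 0 (S N))).
Proof.
  induction N as [|N IH].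
  - rewrite sum_O; simpl; ring.
  - rewrite sum_Sn, IH, (seq_S (S N)), map_app, fold_right_app; simpl.
    rewrite (fold_right_Rplus_shift (g (S N) + 0)); unfold plus; simpl; ring.
Qed.

Lemma sum_n_mul_mod (g : nat -> R) (n a : nat) :
  (0 < n)%nat -> rel_prime (Z.of_nat n) (Z.of_nat a) ->
  sum_n (fun j => g ((j * a) mod n)%nat) (pred n) = sum_n g (pred n).
Proof.
  intros Hn Hcop; rewrite !sum_n_seq, Nat.succ_pred_pos by exact Hn.
  rewrite <- (map_map (fun j => ((j * a) mod n)%nat) g).
  apply fold_right_Rplus_perm, Permutation_map, Permutation_map_same_l.
  - apply FinFun.Injective_map_NoDup_in; [|apply seq_NoDup].
    intros x y Hx%in_seq Hy%in_seq; apply (mul_mod_inj n a); auto; lia.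
  - intros x (y & <- & _)%in_map_iff; apply in_seq.
    pose proof (Nat.mod_upper_bound (y * a) n); lia.
Qed.

Lemma zeta_mul_mod_neq_1 (n a j : nat) : rel_prime (Z.of_nat n) (Z.of_nat a) ->
  (0 < j < n)%nat -> zeta n ((j * a) mod n) <> 1%C.
Proof.
  intros Hcop Hj; apply zeta_neq_1; split.
  - destruct (Nat.eq_dec ((j * a) mod n) 0) as [H0 | H0]; [|lia].
    enough (j = 0%nat) by lia.
    apply (mul_mod_inj n a); [exact Hcop | lia | lia |].
    rewrite H0, Nat.mul_0_l, Nat.Div0.mod_0_l; reflexivity.
  - apply Nat.mod_upper_bound; lia.
Qed.

Lemma feval_geom_coeffs_0 (n a : nat) : (0 < n)%nat ->
  feval n (geom_coeffs n a) 0 = RtoC (INR a).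
Proof.
  intros Hn; rewrite feval_geom_coeffs by exact Hn.
  replace (2 * PI * INR 0 / INR n) with 0 by (simpl; field; apply not_0_INR; lia).
  apply expi_sum_0.
Qed.

Lemma feval_geom_coeffs_mul (n a j : nat) : (0 < n)%nat ->
  (feval n (geom_coeffs n a) j * (zeta n j - 1))%C = (zeta n ((j * a) mod n) - 1)%C.
Proof.
  intros Hn; rewrite feval_geom_coeffs, zeta_mod by exact Hn.
  unfold zeta; rewrite expi_sum_geom, mult_INR.
  f_equal; f_equal; field; apply not_0_INR; lia.
Qed.

Lemma feval_geom_coeffs_neq0 (n a j : nat) : (0 < a)%nat ->
  rel_prime (Z.of_nat n) (Z.of_nat a) -> (j < n)%nat ->
  feval n (geom_coeffs n a) j <> 0%C.
Proof.
  intros Ha Hcop Hj Hf.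
  destruct (Nat.eq_dec j 0) as [-> | Hj0].
  - rewrite feval_geom_coeffs_0 in Hf by lia.
    injection Hf as Hf; revert Hf; apply not_0_INR; lia.
  - apply (Cminus_eq_contra _ _ (zeta_mul_mod_neq_1 n a j Hcop ltac:(lia))).
    rewrite <- feval_geom_coeffs_mul, Hf by lia; ring.
Qed.

(* At [j = 0] both [zeta - 1] terms vanish, [ln 0] is a junk value, and the two copies cancel. *)
Lemma ln_Cmod_feval_geom_coeffs (n a j : nat) : (0 < a)%nat ->
  rel_prime (Z.of_nat n) (Z.of_nat a) -> (j < n)%nat ->
  ln (Cmod (feval n (geom_coeffs n a) j)) + ln (Cmod (zeta n j - 1))
  = ln (Cmod (zeta n ((j * a) mod n) - 1)) + (if Nat.eqb j 0 then ln (INR a) else 0).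
Proof.
  intros Ha Hcop Hj.
  destruct (Nat.eq_dec j 0) as [-> | Hj0].
  - rewrite Nat.mul_0_l, Nat.Div0.mod_0_l, feval_geom_coeffs_0, Cmod_R by lia.
    rewrite Rabs_pos_eq by apply pos_INR; simpl; ring.
  - rewrite <- feval_geom_coeffs_mul by lia.
    replace (Nat.eqb j 0) with false by (symmetry; apply Nat.eqb_neq; exact Hj0).
    rewrite Cmod_mult, ln_mult; [ring | apply Cmod_gt_0 ..].
    + exact (feval_geom_coeffs_neq0 n a j Ha Hcop Hj).
    + apply Cminus_eq_contra, zeta_neq_1; lia.
Qed.

Lemma sum_ln_Cmod_feval_geom_coeffs (n a : nat) : (0 < n)%nat -> (0 < a)%nat ->
  rel_prime (Z.of_nat n) (Z.of_nat a) ->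
  sum_n (fun j => ln (Cmod (feval n (geom_coeffs n a) j))) (pred n) = ln (INR a).
Proof.
  intros Hn Ha Hcop.
  set (gap := fun m => ln (Cmod (zeta n m - 1))).
  assert (Hsum : sum_n (fun j => plus (ln (Cmod (feval n (geom_coeffs n a) j))) (gap j)) (pred n)
               = sum_n (fun j => plus (gap ((j * a) mod n)%nat)
                                      (if Nat.eqb 0 j then ln (INR a) else zero)) (pred n)).
  { apply sum_n_ext_loc; intros j Hj; rewrite Nat.eqb_sym.
    apply ln_Cmod_feval_geom_coeffs; [exact Ha | exact Hcop | lia]. }
  rewrite !sum_n_plus, sum_n_mul_mod, sum_n_indicator in Hsum by assumption.
  unfold plus in Hsum; simpl in Hsum; lra.
Qed.

Lemma mahler_of_nonvanishing (n : nat) (c : nat -> Z) :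
  (forall j, (j < n)%nat -> feval n c j <> 0%C) ->
  mahler n c = Finite (/ INR n * sum_n (fun j => ln (Cmod (feval n c j))) (pred n)).
Proof.
  intros Hc; unfold mahler.
  destruct excluded_middle_informative as [(j & Hj & Hz) | _]; [|reflexivity].
  exfalso; exact (Hc j Hj Hz).
Qed.

Lemma lehmer_Zn_le_mahler (n : nat) (c : nat -> Z) (x : R) :
  mahler n c = Finite x -> 0 < x -> Rbar_le (lehmer_Zn n) (Finite x).
Proof.
  intros Hc Hx; apply (proj1 (Glb_Rbar_correct _)).
  exists c; split; assumption.
Qed.

Theorem theorem4p6 (n : nat) (p : Z) :
  (2 <= n)%nat -> is_rho n p ->
  Rbar_le (lehmer_Zn n) (Finite (/ INR n * ln (IZR p))).
Proof.
  intros Hn [Hp [Hpn _]].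
  assert (Hp2 := prime_ge_2 p Hp).
  replace p with (Z.of_nat (Z.to_nat p)) in * by lia.
  set (a := Z.to_nat p) in *.
  assert (Hcop : rel_prime (Z.of_nat n) (Z.of_nat a))
    by (apply rel_prime_sym, prime_rel_prime; assumption).
  rewrite <- INR_IZR_INZ.
  assert (Ha : (0 < a)%nat) by lia.
  apply (lehmer_Zn_le_mahler n (geom_coeffs n a)).
  - rewrite mahler_of_nonvanishing.
    + rewrite sum_ln_Cmod_feval_geom_coeffs by (assumption || lia); reflexivity.
    + intros j Hj; exact (feval_geom_coeffs_neq0 n a j Ha Hcop Hj).
  - apply Rmult_lt_0_compat.
    + apply Rinv_0_lt_compat, lt_0_INR; lia.
    + rewrite <- ln_1; apply ln_increasing; [lra | apply (lt_INR 1); lia].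
Qed.
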